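(* Let $\kappa$ be a cardinal for which there exists a maximal independent family of size $\kappa$. Then there exists a maximal independent family of size $\kappa$ which is not densely maximal. In particular, there is always a maximal, non-densely maximal independent family of size $\mathfrak i$.
   Context: A family $\mathcal I \subseteq [\omega]^\omega$ is independent if for all finite disjoint $\mathcal A, \mathcal B \subseteq \mathcal I$ the set $\bigcap \mathcal A \setminus \bigcup \mathcal B$ is infinite; it is a maximal independent family (m.i.f.) if it is maximal under inclusion among independent families. $\mathfrak i$ denotes the least size of a maximal independent family. $\mathsf{FF}(\mathcal I)$ is the set of finite partial functions $h:\mathcal I \to 2$; for $h\in\mathsf{FF}(\mathcal I)$, $\mathcal I^h := \bigcap_{A \in \mathrm{dom}(h)} A^{h(A)}$ where $A^0 = A$ and $A^1 = \omega\setminus A$ (Boolean combinations). An independent family $\mathcal I$ is densely maximal if for every $X \in [\omega]^\omega$ and every $h \in \mathsf{FF}(\mathcal I)$ there is $h' \supseteq h$ in $\mathsf{FF}(\mathcal I)$ such that $\mathcal I^{h'} \setminus X$ or $\mathcal I^{h'} \cap X$ is finite. *)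

From mathcomp Require Import all_boot.
From mathcomp Require Import boolp classical_sets functions cardinality.
Set Implicit Arguments. Unset Strict Implicit. Unset Printing Implicit Defensive.
Local Open Scope classical_set_scope.

Definition ifam := set (set nat).

Definition independent (I : ifam) : Prop :=
  (forall A, I A -> infinite_set A) /\
  forall (AA BB : ifam),
    finite_set AA -> finite_set BB -> AA `<=` I -> BB `<=` I ->
    AA `&` BB = set0 ->
    infinite_set [set n : nat | (forall A, AA A -> A n) /\ (forall B, BB B -> ~ B n)].

Definition mif (I : ifam) : Prop :=
  independent I /\ forall J : ifam, independent J -> I `<=` J -> J = I.

(* finite partial functions h : I -> 2, encoded as option-valued maps
   with finite domain contained in I; false = 0, true = 1. *)
Definition dom (h : set nat -> option bool) : ifam := [set A | h A <> None].

Definition FF (I : ifam) (h : set nat -> option bool) : Prop :=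
  finite_set (dom h) /\ dom h `<=` I.

Definition pow (A : set nat) (b : bool) : set nat := if b then ~` A else A.

(* I^h = ⋂_{A ∈ dom h} A^{h(A)} (the index ifam I only constrains dom h) *)
Definition bcomb (h : set nat -> option bool) : set nat :=
  [set n | forall A b, h A = Some b -> pow A b n].

Definition extends (h' h : set nat -> option bool) : Prop :=
  forall A b, h A = Some b -> h' A = Some b.

Definition densely_maximal (I : ifam) : Prop :=
  independent I /\
  forall (X : set nat) (h : set nat -> option bool),
    infinite_set X -> FF I h ->
    exists h', FF I h' /\ extends h' h /\
      (finite_set (bcomb h' `\` X) \/ finite_set (bcomb h' `&` X)).

(* A maximal independent family I is infinite: a finite independent family is
   extended by the set splitting each of its (infinite) atoms into the elements of
   odd and even rank.  So fix distinct members e 0, e 1, ... of I and let shift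
   send e k to e (k+1), fixing the other members.  Interleave every D in I with
   shift D, placing D on the odd numbers and shift D on the even numbers, and add
   the set of even numbers.  On the odd numbers a Boolean combination of the new
   family is a combination of I, on the even numbers one of shifted members of I,
   so the new family is independent; a set outside it would have an odd part
   independent over I, so it is maximal.  Below "even" every cell copies a
   combination of shifted members, none of which is e 0, so the doubled copy of
   e 0 splits all these cells and the family is not densely maximal. *)

From mathcomp Require Import all_boot.
From mathcomp Require Import boolp classical_sets functions cardinality.
Set Implicit Arguments.
Local Open Scope classical_set_scope.

Definition bool_comb (AA BB : ifam) : set nat :=
  [set n | (forall A, AA A -> A n) /\ (forall B, BB B -> ~ B n)].

Lemma unbounded_infinite_nat (S : set nat) :
  (forall N, exists2 n, N <= n & S n) -> infinite_set S.
Proof.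
move=> unbS /finite_seqP[s defS].
have [n maxs_lt_n Sn] := unbS (\max_(i <- s) i).+1.
have : n \in s by rewrite defS in Sn.
by move/(@leq_bigmax_seq _ _ xpredT id)/(_ isT)/(leq_trans maxs_lt_n); rewrite ltnn.
Qed.

Lemma infinite_nat_unbounded (S : set nat) :
  infinite_set S -> forall N, exists2 n, N <= n & S n.
Proof.
move=> infS N; apply: contra_notP infS => noS.
apply: sub_finite_set (finite_II N) => n Sn /=.
by rewrite ltnNge; apply/negP => Nn; apply: noS; exists n.
Qed.

Lemma inj_infinite_image T U (f : T -> U) (S : set T) :
  injective f -> infinite_set S -> infinite_set (f @` S).
Proof. by move=> f_inj; rewrite (eq_finite_set (inj_card_eq (in2W f_inj))). Qed.

Lemma independent_combs (I : ifam) :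
  (forall AA BB : ifam, finite_set AA -> finite_set BB -> AA `<=` I -> BB `<=` I ->
     AA `&` BB = set0 -> infinite_set (bool_comb AA BB)) ->
  independent I.
Proof.
move=> combI; split=> // A IA; apply: (sub_infinite_set _ (combI [set A] set0 _ _ _ _ _)).
- by move=> n [+ _]; apply.
- exact: finite_set1.
- exact: finite_set0.
- by move=> _ ->.
- by [].
- by rewrite setI0.
Qed.

Lemma mif_setU1 (I : ifam) (Y : set nat) :
  mif I -> independent (I `|` [set Y]) -> I Y.
Proof. by move=> [_ maxI] /maxI <-; [right | move=> A; left]. Qed.

Lemma bcomb_bool_comb h :
  bcomb h = bool_comb [set A | h A = Some false] [set A | h A = Some true].
Proof.
apply/seteqP; split=> [n hn | n [hF hT] A [] hA]; [split=> A hA | exact: hT | exact: hF].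
- exact: (hn A false).
- exact: (hn A true).
Qed.

Definition same_atom (I : ifam) m n := forall A, I A -> (A m <-> A n).

Definition atom_rank (I : ifam) n := count (fun m => `[< same_atom I m n >]) (iota 0 n).

Definition alternating (I : ifam) : set nat := [set n | odd (atom_rank I n)].

Lemma atom_rank_next (I : ifam) m n : m < n -> same_atom I m n ->
  (forall k, m < k < n -> ~ same_atom I k n) -> atom_rank I n = (atom_rank I m).+1.
Proof.
move=> lt_mn atom_mn gap; rewrite /atom_rank.
have -> : iota 0 n = iota 0 m ++ m :: iota m.+1 (n - m.+1).
  by rewrite -[in LHS](subnKC (ltnW lt_mn)) iotaD add0n -(subnSK lt_mn).
rewrite count_cat /=.
have -> : count (fun k => `[< same_atom I k n >]) (iota 0 m)
        = count (fun k => `[< same_atom I k m >]) (iota 0 m).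
  apply: eq_in_count => k _; apply: asbool_equiv_eq.
  by split=> atom_k A IA; [rewrite atom_k // atom_mn | rewrite -(atom_mn A IA) atom_k].
have -> : `[< same_atom I m n >] = true by apply/asboolP.
rewrite [count _ (iota m.+1 _)](eq_in_count (a2 := pred0)) ?count_pred0 ?addn0 ?addn1 // => k.
by rewrite mem_iota subnKC // => k_between; apply/negbTE/asboolPn; apply: gap.
Qed.

Section FiniteIndependentFamily.

Variable I : ifam.
Hypotheses (indI : independent I) (finI : finite_set I).

Lemma atom_infinite n : infinite_set [set m | same_atom I m n].
Proof.
pose AA := [set A | I A /\ A n]; pose BB := [set A | I A /\ ~ A n].
apply: (sub_infinite_set _ (indI.2 AA BB _ _ _ _ _)).
- move=> m [inA inB] A IA; split=> [Am | An]; last exact: inA.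
  by apply: contrapT => nAn; apply: (inB A).
- by apply: sub_finite_set finI => A [].
- by apply: sub_finite_set finI => A [].
- by move=> A [].
- by move=> A [].
- by apply/seteqP; split=> // A [[_ An] [_ nAn]].
Qed.

Lemma atom_parity n N (b : bool) :
  exists2 c, N <= c & same_atom I c n /\ odd (atom_rank I c) = b.
Proof.
have unb := infinite_nat_unbounded (@atom_infinite n).
have [c1 Nc1 atom1] := unb N.
have ex_next : exists c, `[< c1 < c /\ same_atom I c n >].
  by have [c lt_c1c atomc] := unb c1.+1; exists c; apply/asboolP.
case: (ex_minnP ex_next) => c2 /asboolP[lt_c12 atom2] min_c2.
have atom12 : same_atom I c1 c2 by move=> A IA; rewrite (atom1 A IA) (atom2 A IA).
have rank2 : atom_rank I c2 = (atom_rank I c1).+1.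
  apply: atom_rank_next => // k /andP[lt_c1k lt_kc2] atomk.
  have : c2 <= k.
    by apply: min_c2; apply/asboolP; split=> // A IA; rewrite (atomk A IA) (atom2 A IA).
  by rewrite leqNgt lt_kc2.
have [<-|odd1] := eqVneq (odd (atom_rank I c1)) b; first by exists c1.
exists c2; first exact: leq_trans Nc1 (ltnW lt_c12).
by split=> //; rewrite rank2 /=; case: (odd _) odd1; case: b.
Qed.

Lemma independent_setU_alternating : independent (I `|` [set alternating I]).
Proof.
set Y := alternating I.
apply: independent_combs => AA BB finA finB subA subB disjAB.
have subA' : AA `\ Y `<=` I by move=> A [/subA[// | ->]] /(_ erefl).
have subB' : BB `\ Y `<=` I by move=> A [/subB[// | ->]] /(_ erefl).
have [n0 [inA inB]] : bool_comb (AA `\ Y) (BB `\ Y) !=set0.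
  apply: infinite_setN0; apply: indI.2 => //; [exact: finite_setD | exact: finite_setD |].
  by apply/seteqP; split=> // A [[AA_A _] [BB_A _]]; rewrite -disjAB.
apply: unbounded_infinite_nat => N.
have [c Nc [atomc Yc]] := atom_parity n0 N `[< AA Y >].
exists c => //; split=> [A AA_A | B BB_B].
  have [eqAY|neqA] := pselect (A = Y); last first.
    by have A' : (AA `\ Y) A by []; rewrite (atomc A (subA' A A')); apply: inA.
  by rewrite eqAY /Y /alternating /= Yc; apply/asboolP; rewrite -eqAY.
have [eqBY|neqB] := pselect (B = Y); last first.
  by have B' : (BB `\ Y) B by []; rewrite (atomc B (subB' B B')); apply: inB.
rewrite eqBY /Y /alternating /= Yc => /asboolP AA_Y.
have : (AA `&` BB) Y by split=> //; rewrite -eqBY.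
by rewrite disjAB.
Qed.

Lemma alternating_notin : ~ I (alternating I).
Proof.
move=> IY.
have [c _ [atomc oddc]] := atom_parity 0 0 true.
have [c' _ [atomc' oddc']] := atom_parity 0 0 false.
have : alternating I c <-> alternating I c' by rewrite (atomc _ IY) (atomc' _ IY).
by rewrite /alternating /= oddc oddc' => -[/(_ isT)].
Qed.

End FiniteIndependentFamily.

Lemma mif_infinite (I : ifam) : mif I -> infinite_set I.
Proof.
move=> mifI finI; apply: (alternating_notin mifI.1 finI).
exact: mif_setU1 mifI (independent_setU_alternating mifI.1 finI).
Qed.

Lemma image_disjoint T U (f : T -> U) (A B : set T) :
  {in A `|` B &, injective f} -> A `&` B = set0 -> f @` A `&` f @` B = set0.
Proof.
move=> f_inj disjAB; apply/seteqP; split=> // _ [[x Ax <-] [y By fyx]].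
have yx : y = x by apply: f_inj; rewrite ?in_setE; [right | left |].
have : (A `&` B) x by split=> //; rewrite -yx.
by rewrite disjAB.
Qed.

Lemma independent_comb_fresh (I a b : ifam) (D : set nat) :
  independent I -> finite_set a -> finite_set b -> a `<=` I -> b `<=` I ->
  a `&` b = set0 -> I D -> ~ a D -> ~ b D ->
  infinite_set (bool_comb (a `|` [set D]) b) /\ infinite_set (bool_comb a (b `|` [set D])).
Proof.
move=> indI fina finb subA subB disjab ID aD bD; split; apply: indI.2 => //.
- by rewrite finite_setU; split=> //; apply: finite_set1.
- by move=> A [/subA | ->].
- apply/seteqP; split=> // A [[aA | ->] bA]; last exact: bD.
  by have : (a `&` b) A by []; rewrite disjab.
- by rewrite finite_setU; split=> //; apply: finite_set1.
- by move=> A [/subB | ->].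
- apply/seteqP; split=> // A [aA [bA | eqAD]]; last by apply: aD; rewrite -eqAD.
  by have : (a `&` b) A by []; rewrite disjab.
Qed.

Definition evens : set nat := [set n | ~~ odd n].

Lemma evens_double m : evens m.*2.
Proof. by rewrite /evens /= odd_double. Qed.

Lemma evens_double_succ m : ~ evens m.*2.+1.
Proof. by rewrite /evens /= odd_double. Qed.

Lemma not_evens_half n : ~ evens n -> n = (n./2).*2.+1.
Proof. by move/negP; rewrite negbK => odd_n; rewrite -[in LHS](odd_double_half n) odd_n. Qed.

Section Interleaving.

Variables (I : ifam) (e : nat -> set nat).
Hypotheses (e_inj : injective e) (e_in : forall k, I (e k)).

Definition eindex (D : set nat) : option nat :=
  match pselect (exists k, D = e k) with
  | left ex_k => Some (projT1 (cid ex_k))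
  | right _ => None
  end.

Variant eindex_spec (D : set nat) : option nat -> Prop :=
  | EindexSome k of D = e k : eindex_spec D (Some k)
  | EindexNone of (forall k, D <> e k) : eindex_spec D None.

Lemma eindexP D : eindex_spec D (eindex D).
Proof.
rewrite /eindex; case: pselect => [ex_k | no_k]; last by constructor=> k eqD; apply: no_k; exists k.
by case: (cid ex_k) => k /= ->; constructor.
Qed.

Lemma eindex_e k : eindex (e k) = Some k.
Proof. by case: eindexP => [k' /e_inj -> | /(_ k)]. Qed.

Definition shift (D : set nat) : set nat := if eindex D is Some k then e k.+1 else D.

Lemma shift_e k : shift (e k) = e k.+1.
Proof. by rewrite /shift eindex_e. Qed.

Lemma shift_inj : injective shift.
Proof.
move=> D1 D2; rewrite /shift.
case: (eindexP D1) => [k1 -> | ne1]; case: (eindexP D2) => [k2 -> | ne2] //.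
- by move/e_inj => [->].
- by move=> eqD; have := ne2 k1.+1; rewrite eqD.
- by move=> eqD; have := ne1 k2.+1; rewrite eqD.
Qed.

Lemma shift_neq_e0 D : shift D <> e 0.
Proof. by rewrite /shift; case: eindexP => [k _ /e_inj | /(_ 0)]. Qed.

Lemma shift_in D : I D -> I (shift D).
Proof. by rewrite /shift; case: eindexP. Qed.

Definition interleave (D : set nat) : set nat :=
  [set n | if odd n then D n./2 else shift D n./2].

Lemma interleave_odd D m : interleave D m.*2.+1 = D m.
Proof. by rewrite /interleave /= odd_double uphalf_double. Qed.

Lemma interleave_even D m : interleave D m.*2 = shift D m.
Proof. by rewrite /interleave /= odd_double doubleK. Qed.

Lemma interleave_inj : injective interleave.
Proof.
move=> D1 D2 eqD; apply/seteqP; split=> m.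
  by have := interleave_odd D1 m; rewrite eqD interleave_odd => <-.
by have := interleave_odd D1 m; rewrite eqD interleave_odd => ->.
Qed.

Lemma interleave_neq_evens D : D !=set0 -> interleave D <> evens.
Proof.
by move=> [m Dm] eqD; apply: (evens_double_succ m); rewrite -eqD interleave_odd.
Qed.

(* A bijection from I onto [set evens] together with all interleavings of members
   of I: e 0 is sent to evens and e k.+1 to interleave (e k). *)
Definition relabel (D : set nat) : set nat :=
  match eindex D with
  | Some 0 => evens
  | Some k.+1 => interleave (e k)
  | None => interleave D
  end.

Definition interleaved : ifam := relabel @` I.

Lemma evens_interleaved : interleaved evens.
Proof. by exists (e 0) => //; rewrite /relabel eindex_e. Qed.

Lemma interleave_interleaved D : I D -> interleaved (interleave D).
Proof.
move=> ID; case: (eindexP D) => [k eqD | neD].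
  by exists (e k.+1) => //; rewrite /relabel eindex_e eqD.
by exists D => //; rewrite /relabel; case: eindexP => [k /neD |].
Qed.

Lemma interleaved_cases X : interleaved X -> X = evens \/ exists2 D, I D & X = interleave D.
Proof.
move=> [D ID <-]; rewrite /relabel; case: eindexP => [[|k] _ | _]; [left | right | right] => //.
- by exists (e k).
- by exists D.
Qed.

Hypothesis indI : independent I.

Lemma relabel_cases D : I D ->
  relabel D = evens /\ D = e 0 \/ exists2 D', I D' & D = shift D' /\ relabel D = interleave D'.
Proof.
rewrite /relabel => ID; case: (eindexP D) => [[|k] -> | neD]; [left | right | right] => //.
- by exists (e k); rewrite ?shift_e.
- by exists D; rewrite // /shift; case: eindexP => [k /neD |].
Qed.

Lemma relabel_inj : {in I &, injective relabel}.
Proof.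
have ne D : I D -> D !=set0 by move/indI.1/infinite_setN0.
move=> D1 D2; rewrite !in_setE => /relabel_cases[[-> ->] | [D1' I1 [-> ->]]].
  by case/relabel_cases=> [[_ ->] | [D2' I2 [_ ->]] /esym/(interleave_neq_evens (ne _ I2))].
case/relabel_cases=> [[-> _] | [D2' _ [-> ->]] /interleave_inj -> //].
by move/(interleave_neq_evens (ne _ I1)).
Qed.

Definition odd_trace (AA : ifam) : ifam := I `&` interleave @^-1` AA.

Definition even_trace (AA : ifam) : ifam := shift @` odd_trace AA.

Lemma odd_trace_finite AA : finite_set AA -> finite_set (odd_trace AA).
Proof. by move=> finA; apply/finite_setIr/finite_preimage => //; apply: in2W interleave_inj. Qed.

Lemma even_trace_finite AA : finite_set AA -> finite_set (even_trace AA).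
Proof. by move=> finA; apply/finite_image/odd_trace_finite. Qed.

Lemma even_trace_sub AA : even_trace AA `<=` I.
Proof. by move=> _ [D [ID _] <-]; apply: shift_in. Qed.

Lemma odd_trace_disjoint AA BB : AA `&` BB = set0 -> odd_trace AA `&` odd_trace BB = set0.
Proof.
move=> disjAB; apply/seteqP; split=> // D [[_ AD] [_ BD]].
by have : (AA `&` BB) (interleave D) by []; rewrite disjAB.
Qed.

Lemma even_trace_disjoint AA BB : AA `&` BB = set0 -> even_trace AA `&` even_trace BB = set0.
Proof. by move/odd_trace_disjoint; apply: image_disjoint; apply: in2W shift_inj. Qed.

Lemma e0_notin_even_trace AA : ~ even_trace AA (e 0).
Proof. by move=> [D _]; apply: shift_neq_e0. Qed.

Lemma odd_transfer AA BB : AA `<=` interleaved -> BB `<=` interleaved -> ~ AA evens ->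
  (fun m => m.*2.+1) @` bool_comb (odd_trace AA) (odd_trace BB) `<=` bool_comb AA BB.
Proof.
move=> subA subB nA _ [m [inA inB] <-]; split=> [X AX | X BX].
  have [eqX | [D ID eqX]] := interleaved_cases (subA X AX); first by rewrite eqX in AX.
  by rewrite eqX interleave_odd; apply: inA; split=> //; rewrite /= -eqX.
have [-> | [D ID eqX]] := interleaved_cases (subB X BX); first exact: evens_double_succ.
by rewrite eqX interleave_odd; apply: inB; split=> //; rewrite /= -eqX.
Qed.

Lemma even_transfer AA BB (a b : ifam) :
  AA `<=` interleaved -> BB `<=` interleaved -> ~ BB evens ->
  even_trace AA `<=` a -> even_trace BB `<=` b ->
  double @` bool_comb a b `<=` bool_comb AA BB.
Proof.
move=> subA subB nB suba subb _ [m [ina inb] <-]; split=> [X AX | X BX].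
  have [-> | [D ID eqX]] := interleaved_cases (subA X AX); first exact: evens_double.
  rewrite eqX interleave_even; apply: ina; apply: suba.
  by exists D => //; split=> //; rewrite /= -eqX.
have [eqX | [D ID eqX]] := interleaved_cases (subB X BX); first by rewrite eqX in BX.
rewrite eqX interleave_even; apply: inb; apply: subb.
by exists D => //; split=> //; rewrite /= -eqX.
Qed.

Lemma interleaved_card : card_eq interleaved I.
Proof. exact: inj_card_eq relabel_inj. Qed.

Lemma interleaved_independent : independent interleaved.
Proof.
apply: independent_combs => AA BB finA finB subA subB disjAB.
have [AA_evens | nA] := pselect (AA evens).
  have nB : ~ BB evens by move=> BB_evens; have : (AA `&` BB) evens by []; rewrite disjAB.
  apply: sub_infinite_set (even_transfer subA subB nB (@subset_refl _ _) (@subset_refl _ _)) _.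
  apply: (inj_infinite_image double_inj); apply: indI.2.
  - exact: even_trace_finite.
  - exact: even_trace_finite.
  - exact: even_trace_sub.
  - exact: even_trace_sub.
  - exact: even_trace_disjoint.
apply: sub_infinite_set (odd_transfer subA subB nA) _.
apply: inj_infinite_image; first by move=> m n /succn_inj/double_inj.
apply: indI.2.
- exact: odd_trace_finite.
- exact: odd_trace_finite.
- exact: subIsetl.
- exact: subIsetl.
- exact: odd_trace_disjoint.
Qed.

Lemma evens_comb_split AA BB :
  finite_set AA -> finite_set BB -> AA `<=` interleaved -> BB `<=` interleaved ->
  AA `&` BB = set0 -> AA evens ->
  infinite_set (bool_comb AA BB `&` double @` e 0) /\
  infinite_set (bool_comb AA BB `\` double @` e 0).
Proof.
move=> finA finB subA subB disjAB AA_evens.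
have nB : ~ BB evens by move=> BB_evens; have : (AA `&` BB) evens by []; rewrite disjAB.
have [inf_pos inf_neg] := independent_comb_fresh (e 0) indI (even_trace_finite finA)
  (even_trace_finite finB) (@even_trace_sub AA) (@even_trace_sub BB)
  (even_trace_disjoint disjAB) (e_in 0) (@e0_notin_even_trace AA) (@e0_notin_even_trace BB).
split.
  apply: sub_infinite_set (inj_infinite_image double_inj inf_pos) => _ [m comb_m <-].
  split; last by exists m => //; apply: comb_m.1; right.
  apply: (even_transfer (a := even_trace AA `|` [set e 0]) (b := even_trace BB) subA subB nB).
  - by move=> X; left.
  - by [].
  - by exists m.
apply: sub_infinite_set (inj_infinite_image double_inj inf_neg) => _ [m comb_m <-].
split.
  apply: (even_transfer (a := even_trace AA) (b := even_trace BB `|` [set e 0]) subA subB nB).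
  - by [].
  - by move=> X; left.
  - by exists m.
by move=> [m' e0m' /double_inj eqm]; apply: (comb_m.2 (e 0)); [right | rewrite -eqm].
Qed.

Lemma interleaved_not_densely_maximal : ~ densely_maximal interleaved.
Proof.
move=> [_ dense].
pose h0 Z := if pselect (Z = evens) then Some false else None.
have dom_h0 : dom h0 `<=` [set evens] by move=> Z; rewrite /dom /h0 /=; case: pselect.
have FF_h0 : FF interleaved h0.
  split; first exact: sub_finite_set dom_h0 (finite_set1 _).
  by move=> Z /dom_h0 ->; apply: evens_interleaved.
have infX := inj_infinite_image double_inj (indI.1 _ (e_in 0)).
have [h [[fin_h sub_h] [ext_h small]]] := dense _ h0 infX FF_h0.
pose AA : ifam := [set Z | h Z = Some false]; pose BB : ifam := [set Z | h Z = Some true].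
have domA : AA `<=` dom h by move=> Z hZ; rewrite /dom /= hZ.
have domB : BB `<=` dom h by move=> Z hZ; rewrite /dom /= hZ.
have disjAB : AA `&` BB = set0 by apply/seteqP; split=> // Z [hA]; rewrite /BB /= hA.
have AA_evens : AA evens by apply: ext_h; rewrite /h0; case: pselect.
have [inf_in inf_out] := evens_comb_split (sub_finite_set domA fin_h)
  (sub_finite_set domB fin_h) (subset_trans domA sub_h) (subset_trans domB sub_h) disjAB AA_evens.
by rewrite bcomb_bool_comb in small; case: small; [apply: inf_out | apply: inf_in].
Qed.

Definition odd_part (Y : set nat) : set nat := [set m | Y m.*2.+1].

Section OddPart.

Variables (J : ifam) (Y : set nat).
Hypotheses (indJ : independent J) (subJ : interleaved `<=` J) (JY : J Y).
Hypothesis nY : ~ interleaved Y.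

Lemma odd_part_notin : ~ I (odd_part Y).
Proof.
move=> IY'.
have neq_evens := interleave_neq_evens (infinite_setN0 (indI.1 _ IY')).
have neqY : interleave (odd_part Y) <> Y.
  by move=> eqY; apply: nY; rewrite -eqY; apply: interleave_interleaved.
have comb_inf : infinite_set (bool_comb [set interleave (odd_part Y)] [set evens; Y]).
  apply: indJ.2; [exact: finite_set1 | exact: finite_set2 | | |].
  - by move=> _ ->; apply/subJ/interleave_interleaved.
  - by move=> _ [-> | ->] //; apply/subJ/evens_interleaved.
  - by apply/seteqP; split=> // _ [-> [/neq_evens | /neqY]].
have [n [inA inB]] := infinite_setN0 comb_inf.
have odd_n := not_evens_half (inB evens (or_introl erefl)).
have := inA _ erefl; rewrite odd_n interleave_odd => Yn.
by apply: (inB Y (or_intror erefl)); rewrite odd_n.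
Qed.

Lemma odd_part_independent : independent (I `|` [set odd_part Y]).
Proof.
(* phi preserves odd parts, so the cells of J inside the odd numbers copy those of
   I `|` [set odd_part Y]. *)
pose phi A := if `[< A = odd_part Y >] then Y else interleave A.
have phi_odd A m : phi A m.*2.+1 = A m.
  by rewrite /phi; case: asboolP => [-> | _]; rewrite ?interleave_odd.
have phi_in A : (I `|` [set odd_part Y]) A -> J (phi A).
  rewrite /phi; case: asboolP => [_ _ | neqA [IA | //]]; first exact: JY.
  exact/subJ/interleave_interleaved.
have phi_neq_evens A : (I `|` [set odd_part Y]) A -> phi A <> evens.
  rewrite /phi; case: asboolP => [_ _ eqY | neqA [IA | //]].
    by apply: nY; rewrite eqY; exact: evens_interleaved.
  exact: interleave_neq_evens (infinite_setN0 (indI.1 _ IA)).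
have phi_inj : {in I `|` [set odd_part Y] &, injective phi}.
  move=> A1 A2; rewrite !in_setE /phi.
  case: (asboolP (A1 = _)) => [eq1 | neq1]; case: (asboolP (A2 = _)) => [eq2 | neq2].
  - by rewrite eq1 eq2.
  - by move=> _ [IA2 | //] eqY; case: nY; rewrite eqY; exact: interleave_interleaved.
  - by move=> [IA1 | //] _ eqY; case: nY; rewrite -eqY; exact: interleave_interleaved.
  - by move=> _ _ /interleave_inj.
apply: independent_combs => AA BB finA finB subA subB disjAB.
have subAB : {subset AA `|` BB <= I `|` [set odd_part Y]}.
  by move=> A; rewrite !in_setE => -[/subA | /subB].
have comb_sub : bool_comb (phi @` AA) (phi @` BB `|` [set evens]) `<=`
                (fun m => m.*2.+1) @` bool_comb AA BB.
  move=> n [inA inB]; have odd_n := not_evens_half (inB evens (or_intror erefl)).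
  exists n./2; last by rewrite -odd_n.
  split=> [A AA_A | B BB_B]; first by rewrite -(phi_odd A) -odd_n; apply: inA; exists A.
  by rewrite -(phi_odd B) -odd_n; apply: inB; left; exists B.
move=> fin_comb; apply: (indJ.2 (phi @` AA) (phi @` BB `|` [set evens])).
- exact: finite_image.
- by rewrite finite_setU; split; [exact: finite_image | exact: finite_set1].
- by move=> _ [A /subA ? <-]; apply: phi_in.
- by move=> _ [[B /subB ? <-] | ->]; [apply: phi_in | apply/subJ/evens_interleaved].
- apply/seteqP; split=> // _ [[A AA_A <-] [BX | /(phi_neq_evens _ (subA _ AA_A))//]].
  have : (phi @` AA `&` phi @` BB) (phi A) by split=> //; exists A.
  by rewrite (image_disjoint (sub_in2 subAB phi_inj) disjAB).
- exact: sub_finite_set comb_sub (finite_image _ fin_comb).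
Qed.

End OddPart.

End Interleaving.

Lemma interleaved_mif (I : ifam) (e : nat -> set nat) :
  injective e -> (forall k, I (e k)) -> mif I -> mif (interleaved I e).
Proof.
move=> e_inj e_in mifI; split; first exact: interleaved_independent mifI.1.
move=> J indJ subJ; apply/seteqP; split=> [Y JY | //]; apply: contrapT => nY.
apply: (odd_part_notin e_inj e_in mifI.1 indJ subJ JY nY).
exact: mif_setU1 mifI (odd_part_independent e_inj e_in mifI.1 indJ subJ JY nY).
Qed.

Theorem proposition2p4 :
  forall I : ifam, mif I ->
    exists J : ifam, mif J /\ card_eq J I /\ ~ densely_maximal J.
Proof.
move=> I mifI.
have /infiniteP/pcard_leP/injfunPex[e e_in e_inj] := mif_infinite mifI.
have {}e_in k : I (e k) by apply: e_in.
have {}e_inj : injective e by move=> x y; apply: e_inj; rewrite ?in_setE.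
exists (interleaved I e); split; first exact: interleaved_mif.
split; first exact: interleaved_card e_in mifI.1.
exact: interleaved_not_densely_maximal e_in mifI.1.
Qed.
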